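(* Let $\mathbf A$ be a balanced residuated semigroup satisfying (H1), (H2), (H3) (for all $x,y$: if $1_x=1_y$ then $1_{xy}=1_x$, $1_{x/y}=1_x$ and $1_{x\backslash y}=1_x$, where $1_x:=x/x$). For each positive idempotent $p$ of $\mathbf A$ let $A_p:=\{a\in A: a\backslash a=p\}$. Then $\{A_p: p \text{ a positive idempotent}\}$ is a partition of $A$; each $A_p$ is closed under $\cdot,\backslash,/$, so that $\mathbf A_p=\langle A_p,\le,\cdot,\backslash,/,p\rangle$ (restricted order and operations) is a residuated monoid with global identity $p$; and each $\mathbf A_p$ is integrally closed, i.e. $a\backslash a=p=a/a$ for all $a\in A_p$.
   Context: A residuated semigroup is a structure $\langle A,\le,\cdot,\backslash,/\rangle$ where $\langle A,\le\rangle$ is a poset, $\langle A,\cdot\rangle$ is a semigroup (we write $xy$ for $x\cdot y$), and for all $x,y,z$: $xy\le z\iff x\le z/y\iff y\le x\backslash z$. An element $p$ is positive if $a\le pa$ and $a\le ap$ for all $a$; idempotent if $pp=p$. A residuated semigroup is balanced if it satisfies $x\backslash x=x/x$ and every element of the form $a\backslash a$ or $a/a$ is positive. A residuated monoid is a residuated semigroup with a global identity $1$ ($1a=a=a1$ for all $a$); it is integrally closed if $x\backslash x=1$ for all $x$. *)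

Record ResSemigroup := {
  car :> Type;
  le : car -> car -> Prop;
  mul : car -> car -> car;
  ldiv : car -> car -> car;
  rdiv : car -> car -> car;
  le_refl : forall x, le x x;
  le_antisym : forall x y, le x y -> le y x -> x = y;
  le_trans : forall x y z, le x y -> le y z -> le x z;
  mul_assoc : forall x y z, mul (mul x y) z = mul x (mul y z);
  res_r : forall x y z, le (mul x y) z <-> le x (rdiv z y);
  res_l : forall x y z, le (mul x y) z <-> le y (ldiv x z)
}.

Arguments le {_} _ _.
Arguments mul {_} _ _.
Arguments ldiv {_} _ _.
Arguments rdiv {_} _ _.

Section Defs.
Variable A : ResSemigroup.

Definition positive (p : A) : Prop :=
  forall a : A, le a (mul p a) /\ le a (mul a p).

Definition idempotent (p : A) : Prop := mul p p = p.

Definition balanced : Prop :=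
  (forall x : A, ldiv x x = rdiv x x) /\
  (forall a : A, positive (ldiv a a) /\ positive (rdiv a a)).

Definition unit_of (x : A) : A := rdiv x x.

Definition H1 : Prop := forall x y : A, unit_of x = unit_of y -> unit_of (mul x y) = unit_of x.
Definition H2 : Prop := forall x y : A, unit_of x = unit_of y -> unit_of (rdiv x y) = unit_of x.
Definition H3 : Prop := forall x y : A, unit_of x = unit_of y -> unit_of (ldiv x y) = unit_of x.

Definition block (p a : A) : Prop := ldiv a a = p.

Definition pos_idem (p : A) : Prop := positive p /\ idempotent p.
End Defs.

Arguments positive {_} _.
Arguments idempotent {_} _.
Arguments unit_of {_} _.
Arguments block {_} _ _.
Arguments pos_idem {_} _.


(* Every element a is absorbed on both sides by u := a\a (upper bound from
   residuation, lower bound from positivity of u), and u is itself a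
   positive idempotent with u\u = u.  Hence A_p is the fibre of the map
   a |-> a\a over p, and since balancedness identifies a\a with the unit
   1_a = a/a, the conditions (H1)-(H3) are exactly closure of each fibre
   under the three operations. *)

Section ResiduatedSemigroup.
Variable A : ResSemigroup.

Lemma mul_ldiv_le (a b : A) : le (mul a (ldiv a b)) b.
Proof. apply (proj2 (res_l A _ _ _)), le_refl. Qed.

Lemma mul_rdiv_le (a b : A) : le (mul (rdiv b a) a) b.
Proof. apply (proj2 (res_r A _ _ _)), le_refl. Qed.

Lemma pos_idem_ldiv_id (p : A) : pos_idem p -> ldiv p p = p.
Proof.
intros [p_pos p_idem]; apply le_antisym.
- apply le_trans with (mul p (ldiv p p)).
  + apply (proj1 (p_pos _)).
  + apply mul_ldiv_le.
- apply (proj1 (res_l A _ _ _)); rewrite p_idem; apply le_refl.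
Qed.

Hypothesis A_balanced : balanced A.

Let ldiv_rdiv_id (a : A) : ldiv a a = rdiv a a := proj1 A_balanced a.
Let ldiv_id_positive (a : A) : positive (ldiv a a) := proj1 (proj2 A_balanced a).

Lemma mul_ldiv_idr (a : A) : mul a (ldiv a a) = a.
Proof.
apply le_antisym; [apply mul_ldiv_le | apply (proj2 (ldiv_id_positive a a))].
Qed.

Lemma mul_ldiv_idl (a : A) : mul (ldiv a a) a = a.
Proof.
apply le_antisym; [rewrite ldiv_rdiv_id; apply mul_rdiv_le |].
apply (proj1 (ldiv_id_positive a a)).
Qed.

Lemma ldiv_id_pos_idem (a : A) : pos_idem (ldiv a a).
Proof.
split; [apply ldiv_id_positive |].
apply le_antisym.
- apply (proj1 (res_l A _ _ _)).
  rewrite <- mul_assoc, !mul_ldiv_idr; apply le_refl.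
- apply (proj1 (ldiv_id_positive a _)).
Qed.

Lemma unit_of_block {p a : A} : block p a -> unit_of a = p.
Proof. unfold block, unit_of; rewrite ldiv_rdiv_id; trivial. Qed.

Lemma block_unit_of {p a : A} : unit_of a = p -> block p a.
Proof. unfold block, unit_of; rewrite ldiv_rdiv_id; trivial. Qed.

End ResiduatedSemigroup.

Theorem proposition3p5 (A : ResSemigroup) :
  balanced A -> H1 A -> H2 A -> H3 A ->
  (* {A_p : p positive idempotent} is a partition of A *)
  ((forall p : A, pos_idem p -> exists a : A, block p a) /\
   (forall a : A, exists p : A, pos_idem p /\ block p a) /\
   (forall (p q a : A), pos_idem p -> pos_idem q ->
        block p a -> block q a -> p = q)) /\
  (* each A_p is closed under ., \, / and is a residuated monoid with
     global identity p, integrally closed *)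
  (forall p : A, pos_idem p ->
     (forall a b : A, block p a -> block p b ->
        block p (mul a b) /\ block p (ldiv a b) /\ block p (rdiv a b)) /\
     block p p /\
     (forall a : A, block p a -> mul p a = a /\ mul a p = a) /\
     (forall a : A, block p a -> ldiv a a = p /\ rdiv a a = p)).
Proof.
intros A_bal h1 h2 h3; split; [split; [|split] |].
- intros p p_pi; exists p; apply pos_idem_ldiv_id, p_pi.
- intros a; exists (ldiv a a); split; [apply ldiv_id_pos_idem, A_bal | reflexivity].
- intros p q a _ _ a_p a_q; unfold block in *; congruence.
- intros p p_pi; split; [|split; [|split]].
  + intros a b a_p b_p.
    pose proof (unit_of_block _ A_bal a_p) as ua.
    assert (uab : unit_of a = unit_of b)
      by (rewrite ua; symmetry; exact (unit_of_block _ A_bal b_p)).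
    split; [|split]; apply (block_unit_of _ A_bal); rewrite <- ua.
    * exact (h1 a b uab).
    * exact (h3 a b uab).
    * exact (h2 a b uab).
  + apply pos_idem_ldiv_id, p_pi.
  + intros a a_p; unfold block in a_p; subst p.
    split; [apply mul_ldiv_idl | apply mul_ldiv_idr]; exact A_bal.
  + intros a a_p; split; [exact a_p |].
    exact (unit_of_block _ A_bal a_p).
Qed.
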